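(* Let $\theta$ be the logarithmic mean and let $z=(z_1,z_2)\in\mathbb{R}^2$. If $\min\{z_1,z_2\}\le0$ then $z\notin\partial^+\theta(0)$. Otherwise there is a unique $q_1\in(0,\infty)$ with $\partial_1\theta(q_1^{-1/2},q_1^{1/2})=z_1$, and $z\in\partial^+\theta(0)$ if and only if $z_2\ge\partial_2\theta(q_1^{-1/2},q_1^{1/2})$.
   Context: The logarithmic mean $\theta:[0,\infty)^2\to[0,\infty)$ is $\theta(s,t)=0$ if $s=0$ or $t=0$, $\theta(s,s)=s$, and $\theta(s,t)=\frac{t-s}{\log t-\log s}$ otherwise; it is regarded as a concave function $\mathbb{R}^2\to\mathbb{R}\cup\{-\infty\}$ with $\theta(s,t)=-\infty$ if $\min\{s,t\}<0$. The super-differential is $\partial^+\theta(x)=\{r\in\mathbb{R}^2:\theta(y)\le\theta(x)+\langle r,y-x\rangle\ \forall y\in\mathbb{R}^2\}$. *)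

From Stdlib Require Import Reals.
From Coquelicot Require Import Coquelicot.
Open Scope R_scope.

(* Logarithmic mean on [0,oo)^2 (its real values; only used for s,t >= 0). *)
Definition logmean (s t : R) : R :=
  if Req_EM_T s 0 then 0
  else if Req_EM_T t 0 then 0
  else if Req_EM_T s t then s
  else (t - s) / (ln t - ln s).

(* theta regarded as a concave function R^2 -> R \cup {-oo}. *)
Definition theta (x : R * R) : Rbar :=
  if Rlt_dec (Rmin (fst x) (snd x)) 0 then m_infty
  else Finite (logmean (fst x) (snd x)).

Definition superdiff (f : R * R -> Rbar) (x : R * R) (r : R * R) : Prop :=
  forall y : R * R,
    Rbar_le (f y)
      (Rbar_plus (f x)
         (Finite (fst r * (fst y - fst x) + snd r * (snd y - snd x)))).

Definition d1theta (a b : R) : R := Derive (fun s => logmean s b) a.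
Definition d2theta (a b : R) : R := Derive (fun t => logmean a t) b.

From Stdlib Require Import Reals Lra Factorial.
From Coquelicot Require Import Coquelicot.
Open Scope R_scope.

(* With [exprel w = (exp w - 1) / w] one has [logmean s t = s * exprel (ln (t / s))],
   so the partial derivatives of [logmean] at [(s, t)] depend only on
   [u = ln (t / s)]: they are [exprel u - exprel' u] and [exp (- u) * exprel' u].
   Everything rests on [exprel'' < exprel'], which comes from
   [w^3 (exprel' w - exprel'' w) = (w - 2) exp w + w + 2], a function with the
   sign of [w]. It makes the first partial derivative increasing, hence
   injective; as it also takes every positive value, this gives the unique [q1].
   It makes the second one decreasing, which puts [logmean] below each of its
   tangent planes on the open quadrant.
   As [theta 0 = 0], [z] is a supergradient at [0] iff [logmean s t <= z1 s + z2 t]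
   on the quadrant. Both [logmean s 1] and [logmean 1 s] are unbounded, which
   excludes [min z <= 0]; at [(/ sqrt q1, sqrt q1)], Euler's identity for the
   1-homogeneous [logmean] turns the tangent plane into the threshold on [z2]. *)

Lemma is_derive_eq (f : R -> R) x l1 l2 :
  is_derive f x l1 -> is_derive f x l2 -> l1 = l2.
Proof. rewrite !is_derive_Reals; apply uniqueness_limite. Qed.

Lemma is_derive_pos_lt (f f' : R -> R) a b :
  (forall x, is_derive f x (f' x)) -> a < b -> (forall c, a < c < b -> 0 < f' c) ->
  f a < f b.
Proof.
  intros Hf Hab Hpos.
  destruct (MVT_cor2 f f' a b Hab) as [c [Hmvt Hc]].
  { intros c _; apply is_derive_Reals, Hf. }
  specialize (Hpos c Hc). nra.
Qed.

Lemma is_derive_sign_change_min (f f' : R -> R) u :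
  (forall x, is_derive f x (f' x)) ->
  (forall x, x < u -> f' x <= 0) -> (forall x, u < x -> 0 <= f' x) ->
  forall v, f u <= f v.
Proof.
  intros Hf Hneg Hpos v.
  assert (Hd : forall a b c, a <= c <= b -> derivable_pt_lim f c (f' c))
    by (intros; apply is_derive_Reals, Hf).
  destruct (Rtotal_order u v) as [Huv | [<- | Hvu]].
  - destruct (MVT_cor2 f f' u v Huv (Hd u v)) as [c [Hmvt Hc]].
    specialize (Hpos c (proj1 Hc)). nra.
  - lra.
  - destruct (MVT_cor2 f f' v u Hvu (Hd v u)) as [c [Hmvt Hc]].
    specialize (Hneg c (proj2 Hc)). nra.
Qed.

Lemma exp_ge_cube x : 0 <= x -> (1 + x / 3) ^ 3 <= exp x.
Proof.
  intro Hx. replace (exp x) with (exp (x / 3) ^ 3)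
    by (simpl; rewrite Rmult_1_r, <- !exp_plus; f_equal; field).
  apply pow_incr. pose proof (exp_ineq1_le (x / 3)). lra.
Qed.

Lemma exp_cubic_sign x : x <> 0 -> 0 < x * ((x - 2) * exp x + x + 2).
Proof.
  intro Hx.
  set (p t := (t - 2) * exp t + t + 2).
  assert (Hp : forall t, is_derive p t ((t - 1) * exp t + 1)).
  { intro t; unfold p; auto_derive; [exact I | ring]. }
  assert (Hp' : forall t, t <> 0 -> 0 < (t - 1) * exp t + 1).
  { intros t Ht.
    assert (1 - t < exp (- t)) by (apply exp_ineq1; lra).
    assert (exp (- t) * exp t = 1) by (rewrite <- exp_plus, Rplus_opp_l; apply exp_0).
    pose proof (exp_pos t). nra. }
  assert (Hp0 : p 0 = 0) by (unfold p; rewrite exp_0; ring).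
  fold (p x). destruct (Rlt_or_le 0 x) as [Hpos | Hneg].
  - assert (p 0 < p x)
      by (apply (is_derive_pos_lt p _ 0 x Hp Hpos); intros; apply Hp'; lra).
    nra.
  - assert (p x < p 0)
      by (apply (is_derive_pos_lt p _ x 0 Hp); try lra; intros; apply Hp'; lra).
    nra.
Qed.

Lemma exp_ln_minus s t : 0 < s -> 0 < t -> exp (ln t - ln s) = t / s.
Proof. intros Hs Ht. unfold Rminus. rewrite exp_plus, exp_Ropp, !exp_ln; auto. Qed.

(* [exprel w] is [(exp w - 1) / w], continued by [1] at [0]: its power series
   has the coefficients [1 / (n + 1)!] of [exp] shifted by one. *)
Definition exprel_coef : nat -> R := PS_decr_1 (fun n => / INR (fact n)).
Definition exprel : R -> R := PSeries exprel_coef.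
Definition exprel' : R -> R := PSeries (PS_derive exprel_coef).
Definition exprel'' : R -> R := PSeries (PS_derive (PS_derive exprel_coef)).

Lemma CV_radius_exp_coef : CV_radius (fun n => / INR (fact n)) = p_infty.
Proof.
  apply CV_radius_infinite_DAlembert.
  - intro n; apply Rinv_neq_0_compat, not_0_INR, fact_neq_0.
  - apply is_lim_seq_ext with (u := fun n => / INR (S n)).
    + intro n. rewrite fact_simpl, mult_INR.
      assert (0 < INR (fact n)) by apply lt_0_INR, lt_O_fact.
      assert (0 < INR (S n)) by apply lt_0_INR, Nat.lt_0_succ.
      replace (/ (INR (S n) * INR (fact n)) / / INR (fact n)) with (/ INR (S n))
        by (field; lra).
      symmetry; apply Rabs_pos_eq, Rlt_le, Rinv_0_lt_compat; lra.
    + replace (Finite 0) with (Rbar_inv p_infty) by reflexivity.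
      apply is_lim_seq_inv; [|discriminate].
      apply (is_lim_seq_incr_1 INR), is_lim_seq_INR.
Qed.

Lemma CV_radius_exprel_coef : CV_radius exprel_coef = p_infty.
Proof. unfold exprel_coef; rewrite CV_radius_decr_1; apply CV_radius_exp_coef. Qed.

Lemma is_derive_exprel x : is_derive exprel x (exprel' x).
Proof. apply is_derive_PSeries; rewrite CV_radius_exprel_coef; exact I. Qed.

Lemma is_derive_exprel' x : is_derive exprel' x (exprel'' x).
Proof.
  apply is_derive_PSeries; rewrite CV_radius_derive, CV_radius_exprel_coef; exact I.
Qed.

Lemma is_derive_exprel_comp (h : R -> R) x dh :
  is_derive h x dh -> is_derive (fun t => exprel (h t)) x (dh * exprel' (h x)).
Proof. intro Hh; exact (is_derive_comp exprel h x _ _ (is_derive_exprel _) Hh). Qed.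

Lemma exprel_spec x : x * exprel x = exp x - 1.
Proof.
  rewrite exp_Reals, PSeries_decr_1.
  - unfold exprel, exprel_coef; simpl; field.
  - apply CV_radius_inside; rewrite CV_radius_exp_coef; exact I.
Qed.

Lemma exprel_0 : exprel 0 = 1.
Proof. unfold exprel; rewrite PSeries_0; unfold exprel_coef, PS_decr_1; simpl; field. Qed.

Lemma exprel'_0 : exprel' 0 = 1 / 2.
Proof.
  unfold exprel'; rewrite PSeries_0; unfold PS_derive, exprel_coef, PS_decr_1; simpl; field.
Qed.

Lemma exprel''_0 : exprel'' 0 = 1 / 3.
Proof.
  unfold exprel''; rewrite PSeries_0; unfold PS_derive, exprel_coef, PS_decr_1; simpl; field.
Qed.

Lemma exprel'_spec x : exprel x + x * exprel' x = exp x.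
Proof.
  assert (Hl : is_derive (fun t => t * exprel t) x (1 * exprel x + x * exprel' x)).
  { apply Derive.is_derive_mult;
      [exact (is_derive_id (K := R_AbsRing) x) | apply is_derive_exprel]. }
  assert (Hr : is_derive (fun t => t * exprel t) x (exp x)).
  { apply is_derive_ext with (f := fun t => exp t - 1); [intro t; now rewrite exprel_spec|].
    auto_derive; [exact I | ring]. }
  pose proof (is_derive_eq _ _ _ _ Hl Hr). lra.
Qed.

Lemma exprel''_spec x : 2 * exprel' x + x * exprel'' x = exp x.
Proof.
  assert (Hl : is_derive (fun t => exprel t + t * exprel' t) x
                 (exprel' x + (1 * exprel' x + x * exprel'' x))).
  { apply (is_derive_plus exprel); [apply is_derive_exprel|].
    apply Derive.is_derive_mult;
      [exact (is_derive_id (K := R_AbsRing) x) | apply is_derive_exprel']. }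
  assert (Hr : is_derive (fun t => exprel t + t * exprel' t) x (exp x)).
  { apply is_derive_ext with (f := exp); [intro t; now rewrite exprel'_spec|].
    apply is_derive_exp. }
  pose proof (is_derive_eq _ _ _ _ Hl Hr). lra.
Qed.

Lemma exprel''_lt_exprel' x : exprel'' x < exprel' x.
Proof.
  destruct (Req_dec x 0) as [-> | Hx].
  { rewrite exprel'_0, exprel''_0; lra. }
  assert (Hcubic : x ^ 3 * (exprel' x - exprel'' x) = (x - 2) * exp x + x + 2).
  { enough (Hzero : x ^ 3 * (exprel' x - exprel'' x) - ((x - 2) * exp x + x + 2)
      = (x ^ 2 + 2 * x) * (exprel x + x * exprel' x - exp x)
        - (x + 2) * (x * exprel x - (exp x - 1))
        - x ^ 2 * (2 * exprel' x + x * exprel'' x - exp x))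
      by (rewrite exprel_spec, exprel'_spec, exprel''_spec in Hzero; lra).
    ring. }
  pose proof (exp_cubic_sign x Hx) as Hsign. rewrite <- Hcubic in Hsign.
  assert (0 < x ^ 4)
    by (replace (x ^ 4) with ((x ^ 2) ^ 2) by ring; apply pow2_gt_0, pow_nonzero, Hx).
  nra.
Qed.

(* [d1logmean u] and [d2logmean u] are the partial derivatives of [logmean]
   at [(1, exp u)]. *)
Definition d1logmean (u : R) : R := exprel u - exprel' u.
Definition d2logmean (u : R) : R := exp (- u) * exprel' u.

Lemma is_derive_d1logmean u : is_derive d1logmean u (exprel' u - exprel'' u).
Proof.
  apply (is_derive_minus exprel exprel'); [apply is_derive_exprel | apply is_derive_exprel'].
Qed.

Lemma d1logmean_increasing x y : x < y -> d1logmean x < d1logmean y.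
Proof.
  intro Hxy. apply (is_derive_pos_lt _ _ x y is_derive_d1logmean Hxy).
  intros c _. pose proof (exprel''_lt_exprel' c). lra.
Qed.

Lemma d1logmean_inj x y : d1logmean x = d1logmean y -> x = y.
Proof.
  intro Heq. destruct (Rtotal_order x y) as [Hxy | [Hxy | Hxy]]; [| exact Hxy |];
    apply d1logmean_increasing in Hxy; lra.
Qed.

Lemma d2logmean_decreasing x y : x < y -> d2logmean y < d2logmean x.
Proof.
  intro Hxy. enough (- d2logmean x < - d2logmean y) by lra.
  apply (is_derive_pos_lt (fun u => - d2logmean u)
           (fun u => exp (- u) * (exprel' u - exprel'' u)) x y); [| exact Hxy |].
  - intro u. unfold d2logmean.
    replace (exp (- u) * (exprel' u - exprel'' u))
      with (- (- exp (- u) * exprel' u + exp (- u) * exprel'' u)) by ring.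
    apply (is_derive_opp (fun t => exp (- t) * exprel' t)).
    apply (Derive.is_derive_mult (fun t => exp (- t)) exprel'); [|apply is_derive_exprel'].
    auto_derive; [exact I | ring].
  - intros c _. pose proof (exprel''_lt_exprel' c). pose proof (exp_pos (- c)). nra.
Qed.

Lemma d1logmean_spec u : u ^ 2 * d1logmean u = exp u - u - 1.
Proof.
  enough (Hzero : u ^ 2 * d1logmean u - (exp u - u - 1)
    = (u + 1) * (u * exprel u - (exp u - 1)) - u * (exprel u + u * exprel' u - exp u))
    by (rewrite exprel_spec, exprel'_spec in Hzero; lra).
  unfold d1logmean; ring.
Qed.

(* [u^2 * d1logmean u = exp u - u - 1] is below [- u] for [u < 0] and at least
   [u^2 / 3 + u^3 / 27] for [u >= 0]. *)
Lemma d1logmean_surjective z : 0 < z -> exists u, d1logmean u = z.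
Proof.
  intro Hz.
  set (lo := - (1 + z) / z). set (hi := 27 * z).
  assert (Hlo : d1logmean lo < z).
  { assert (Hlo_z : lo * z = - (1 + z)) by (unfold lo; field; lra).
    assert (lo < 0) by (unfold lo; apply Rdiv_neg_pos; lra).
    assert (exp lo < 1) by (rewrite <- exp_0; apply exp_increasing; lra).
    pose proof (d1logmean_spec lo).
    assert (0 < lo ^ 2) by (apply pow2_gt_0; lra).
    nra. }
  assert (Hhi : z < d1logmean hi).
  { pose proof (d1logmean_spec hi). pose proof (exp_ge_cube hi ltac:(unfold hi; lra)).
    assert (0 < hi ^ 2) by (apply pow2_gt_0; unfold hi; lra).
    apply (Rmult_lt_reg_l (hi ^ 2)); [assumption|]. unfold hi in *. nra. }
  assert (Hcont : continuity d1logmean).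
  { intro x. apply continuity_pt_filterlim.
    exact (ex_derive_continuous d1logmean x (ex_intro _ _ (is_derive_d1logmean x))). }
  destruct (IVT_gen d1logmean lo hi z Hcont) as [u [_ Hu]].
  - rewrite Rmin_left, Rmax_right; lra.
  - now exists u.
Qed.

Lemma exp_mul_d2logmean u : exp u * d2logmean u = exprel' u.
Proof.
  unfold d2logmean. rewrite <- Rmult_assoc, <- exp_plus, Rplus_opp_r, exp_0. ring.
Qed.

(* The gap [d1logmean w + d2logmean w * exp t - exprel t] has derivative
   [exp t * (d2logmean w - d2logmean t)], whose sign is that of [t - w]. *)
Lemma exprel_le_tangent w v : exprel v <= d1logmean w + d2logmean w * exp v.
Proof.
  set (gap t := d1logmean w + d2logmean w * exp t - exprel t).
  assert (Hgap : forall t, is_derive gap t (exp t * (d2logmean w - d2logmean t))).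
  { intro t. unfold gap.
    replace (exp t * (d2logmean w - d2logmean t))
      with (d2logmean w * exp t - exprel' t) by (rewrite <- exp_mul_d2logmean; ring).
    apply (is_derive_minus (fun t => d1logmean w + d2logmean w * exp t) exprel);
      [auto_derive; [exact I | ring] | apply is_derive_exprel]. }
  assert (Hgap_w : gap w = 0).
  { unfold gap, d1logmean. rewrite Rmult_comm, exp_mul_d2logmean. ring. }
  enough (gap w <= gap v) by (unfold gap in *; lra).
  apply (is_derive_sign_change_min gap _ w Hgap); intros t Ht;
    pose proof (d2logmean_decreasing _ _ Ht); pose proof (exp_pos t); nra.
Qed.

Lemma logmean_0_l t : logmean 0 t = 0.
Proof. unfold logmean. destruct (Req_EM_T 0 0); [reflexivity | lra]. Qed.

Lemma logmean_0_r s : logmean s 0 = 0.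
Proof.
  unfold logmean. destruct (Req_EM_T s 0); [reflexivity|].
  destruct (Req_EM_T 0 0); [reflexivity | lra].
Qed.

Lemma logmean_eq s t : 0 < s -> 0 < t -> logmean s t = s * exprel (ln t - ln s).
Proof.
  intros Hs Ht. unfold logmean.
  destruct (Req_EM_T s 0); [lra|]. destruct (Req_EM_T t 0); [lra|].
  destruct (Req_EM_T s t) as [<- | Hst].
  - rewrite Rminus_diag, exprel_0. ring.
  - assert (Hln : ln t - ln s <> 0).
    { intro Heq. apply Hst, ln_inv; [assumption | assumption | lra]. }
    pose proof (exprel_spec (ln t - ln s)) as Hspec.
    rewrite exp_ln_minus in Hspec by assumption.
    replace (exprel (ln t - ln s)) with ((t / s - 1) / (ln t - ln s))
      by (rewrite <- Hspec; field; auto).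
    field; auto.
Qed.

Lemma logmean_le_tangent_plane w s t :
  0 < s -> 0 < t -> logmean s t <= d1logmean w * s + d2logmean w * t.
Proof.
  intros Hs Ht. rewrite logmean_eq by assumption.
  pose proof (exprel_le_tangent w (ln t - ln s)) as Htangent.
  rewrite exp_ln_minus in Htangent by assumption.
  apply (Rmult_le_compat_l s) in Htangent; [|lra].
  replace (s * (d1logmean w + d2logmean w * (t / s)))
    with (d1logmean w * s + d2logmean w * t) in Htangent by (field; lra).
  exact Htangent.
Qed.

Lemma logmean_1_exp v : logmean 1 (exp v) = exprel v.
Proof. rewrite logmean_eq, ln_1, ln_exp, Rminus_0_r by (lra || apply exp_pos). ring. Qed.

Lemma exprel_opp x : exp x * exprel (- x) = exprel x.
Proof.
  destruct (Req_dec x 0) as [-> | Hx].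
  { rewrite Ropp_0, exp_0. ring. }
  apply (Rmult_eq_reg_l x); [|exact Hx].
  pose proof (exprel_spec (- x)). rewrite exprel_spec.
  assert (exp x * exp (- x) = 1) by (rewrite <- exp_plus, Rplus_opp_r; apply exp_0).
  nra.
Qed.

Lemma logmean_exp_1 v : logmean (exp v) 1 = exprel v.
Proof.
  rewrite logmean_eq, ln_1, ln_exp by (lra || apply exp_pos).
  rewrite Rminus_0_l. apply exprel_opp.
Qed.

Lemma exprel_ge_linear x : 0 <= x -> 1 + x / 3 <= exprel x.
Proof.
  intro Hx. destruct (Req_dec x 0) as [-> | Hx0].
  { rewrite exprel_0. lra. }
  apply (Rmult_le_reg_l x); [lra|].
  rewrite exprel_spec. pose proof (exp_ge_cube x Hx). nra.
Qed.

Lemma exprel_unbounded M : exists v, M < exprel v.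
Proof.
  exists (3 * Rabs M + 3).
  pose proof (exprel_ge_linear (3 * Rabs M + 3) ltac:(pose proof (Rabs_pos M); lra)).
  pose proof (Rle_abs M). lra.
Qed.

Lemma logmean_not_below_plane z1 z2 :
  Rmin z1 z2 <= 0 ->
  ~ (forall s t, 0 <= s -> 0 <= t -> logmean s t <= z1 * s + z2 * t).
Proof.
  intros Hmin Hplane.
  assert (z1 <= 0 \/ z2 <= 0) as [Hz1 | Hz2]
    by (unfold Rmin in Hmin; destruct (Rle_dec z1 z2); lra).
  - destruct (exprel_unbounded z2) as [v Hv].
    pose proof (Hplane (exp v) 1 (Rlt_le _ _ (exp_pos v)) Rle_0_1) as Hle.
    rewrite logmean_exp_1 in Hle. pose proof (exp_pos v). nra.
  - destruct (exprel_unbounded z1) as [v Hv].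
    pose proof (Hplane 1 (exp v) Rle_0_1 (Rlt_le _ _ (exp_pos v))) as Hle.
    rewrite logmean_1_exp in Hle. pose proof (exp_pos v). nra.
Qed.

Lemma logmean_below_plane_iff w z2 :
  0 <= d1logmean w -> 0 <= z2 ->
  (forall s t, 0 <= s -> 0 <= t -> logmean s t <= d1logmean w * s + z2 * t) <->
  d2logmean w <= z2.
Proof.
  intros Hd1 Hz2. split.
  - intro Hplane.
    pose proof (Hplane 1 (exp w) Rle_0_1 (Rlt_le _ _ (exp_pos w))) as Hle.
    assert (Heuler : exprel w = d1logmean w + d2logmean w * exp w)
      by (unfold d1logmean; rewrite Rmult_comm, exp_mul_d2logmean; ring).
    rewrite logmean_1_exp, Heuler in Hle. pose proof (exp_pos w). nra.
  - intros Hd2 s t Hs Ht.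
    destruct (Req_dec s 0) as [-> | Hs0]; [rewrite logmean_0_l; nra|].
    destruct (Req_dec t 0) as [-> | Ht0]; [rewrite logmean_0_r; nra|].
    pose proof (logmean_le_tangent_plane w s t ltac:(lra) ltac:(lra)). nra.
Qed.

Lemma superdiff_theta_0_iff z1 z2 :
  superdiff theta (0, 0) (z1, z2) <->
  (forall s t, 0 <= s -> 0 <= t -> logmean s t <= z1 * s + z2 * t).
Proof.
  unfold superdiff, theta; simpl.
  destruct (Rlt_dec (Rmin 0 0) 0) as [Hmin|_]; [rewrite Rmin_left in Hmin; lra|].
  rewrite logmean_0_l. split.
  - intros Hsd s t Hs Ht. specialize (Hsd (s, t)); simpl in Hsd.
    destruct (Rlt_dec (Rmin s t) 0) as [Hmin|_];
      [unfold Rmin in Hmin; destruct (Rle_dec s t); lra|].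
    simpl in Hsd. lra.
  - intros Hplane [s t]; simpl.
    destruct (Rlt_dec (Rmin s t) 0) as [|Hmin]; [exact I|].
    assert (0 <= s /\ 0 <= t) as [Hs Ht]
      by (unfold Rmin in Hmin; destruct (Rle_dec s t); lra).
    simpl. specialize (Hplane s t Hs Ht). lra.
Qed.

Lemma d1theta_eq a b : 0 < a -> 0 < b -> d1theta a b = d1logmean (ln b - ln a).
Proof.
  intros Ha Hb. unfold d1theta. apply is_derive_unique.
  apply (is_derive_ext_loc (fun s => s * exprel (ln b - ln s))).
  { apply (filter_imp (fun s => 0 < s)); [|exact (open_gt 0 a Ha)].
    intros s Hs. symmetry. now apply logmean_eq. }
  replace (d1logmean (ln b - ln a))
    with (1 * exprel (ln b - ln a) + a * (- / a * exprel' (ln b - ln a)))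
    by (unfold d1logmean; field; lra).
  apply (Derive.is_derive_mult (fun s => s) (fun s => exprel (ln b - ln s)));
    [exact (is_derive_id (K := R_AbsRing) a)|].
  apply (is_derive_exprel_comp (fun s => ln b - ln s)).
  auto_derive; [exact Ha | ring].
Qed.

Lemma d2theta_eq a b : 0 < a -> 0 < b -> d2theta a b = d2logmean (ln b - ln a).
Proof.
  intros Ha Hb. unfold d2theta. apply is_derive_unique.
  apply (is_derive_ext_loc (fun t => a * exprel (ln t - ln a))).
  { apply (filter_imp (fun t => 0 < t)); [|exact (open_gt 0 b Hb)].
    intros t Ht. symmetry. now apply logmean_eq. }
  replace (d2logmean (ln b - ln a)) with (a * (/ b * exprel' (ln b - ln a))).
  - apply is_derive_scal, (is_derive_exprel_comp (fun t => ln t - ln a)).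
    auto_derive; [exact Hb | ring].
  - unfold d2logmean. rewrite Ropp_minus_distr, exp_ln_minus by assumption. field; lra.
Qed.

Lemma ln_sqrt_minus_ln_inv_sqrt q : 0 < q -> ln (sqrt q) - ln (/ sqrt q) = ln q.
Proof.
  intro Hq. pose proof (sqrt_lt_R0 q Hq).
  replace (ln q) with (ln (sqrt q * sqrt q)) by (rewrite sqrt_sqrt; lra).
  rewrite ln_Rinv, ln_mult by assumption. ring.
Qed.

Theorem lemma4p7 (z1 z2 : R) :
  (Rmin z1 z2 <= 0 -> ~ superdiff theta (0, 0) (z1, z2)) /\
  (0 < Rmin z1 z2 ->
     (exists! q1 : R, 0 < q1 /\ d1theta (/ sqrt q1) (sqrt q1) = z1) /\
     (forall q1 : R, 0 < q1 -> d1theta (/ sqrt q1) (sqrt q1) = z1 ->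
        (superdiff theta (0, 0) (z1, z2) <->
         d2theta (/ sqrt q1) (sqrt q1) <= z2))).
Proof.
  assert (Hdiag : forall q, 0 < q ->
            d1theta (/ sqrt q) (sqrt q) = d1logmean (ln q) /\
            d2theta (/ sqrt q) (sqrt q) = d2logmean (ln q)).
  { intros q Hq. pose proof (sqrt_lt_R0 q Hq).
    rewrite d1theta_eq, d2theta_eq, ln_sqrt_minus_ln_inv_sqrt
      by (auto using Rinv_0_lt_compat).
    split; reflexivity. }
  split.
  - intros Hmin Hsd. apply (logmean_not_below_plane z1 z2 Hmin).
    now apply superdiff_theta_0_iff.
  - intro Hmin. apply Rmin_Rgt in Hmin as [Hz1 Hz2]. split.
    + destruct (d1logmean_surjective z1 Hz1) as [u Hu].
      exists (exp u). split.
      * split; [apply exp_pos|].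
        now rewrite (proj1 (Hdiag _ (exp_pos u))), ln_exp.
      * intros q [Hq Hq1]. rewrite (proj1 (Hdiag q Hq)), <- Hu in Hq1.
        rewrite <- (exp_ln q Hq). f_equal. now apply d1logmean_inj.
    + intros q Hq Hq1. destruct (Hdiag q Hq) as [Hd1 Hd2].
      rewrite Hd1 in Hq1. rewrite superdiff_theta_0_iff, Hd2, <- Hq1.
      apply logmean_below_plane_iff; lra.
Qed.
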